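(* Let $n\ge1$. Every $n$-qubit unitary of the 11-stage form -H-C-P-C-P-C-H-P-C-P-C- (i.e. a composition, in this order of application, of an $\textsc{H}$-layer, $\textsc{C}$-layer, $\textsc{P}$-layer, $\textsc{C}$-layer, $\textsc{P}$-layer, $\textsc{C}$-layer, $\textsc{H}$-layer, $\textsc{P}$-layer, $\textsc{C}$-layer, $\textsc{P}$-layer, $\textsc{C}$-layer) can be written in the 8-stage form -H-C-CZ-P-H-P-CZ-C-, i.e. as a composition, in this order of application, of an $\textsc{H}$-layer, a $\textsc{C}$-layer, a $\textsc{CZ}$-layer, a $\textsc{P}$-layer, an $\textsc{H}$-layer, a $\textsc{P}$-layer, a $\textsc{CZ}$-layer and a $\textsc{C}$-layer.
   Context: Gates: $\textsc{H}=\frac{1}{\sqrt2}\begin{pmatrix}1&1\\1&-1\end{pmatrix}$, $\textsc{P}=\mathrm{diag}(1,i)$, $\textsc{CNOT}|a,b\rangle=|a,a\oplus b\rangle$, $\textsc{CZ}|a,b\rangle=(-1)^{ab}|a,b\rangle$. Layers on $n$ qubits: an $\textsc{H}$-layer is $\bigotimes_{j} \textsc{H}^{b_j}$, $b_j\in\{0,1\}$; a $\textsc{P}$-layer is $\bigotimes_{j} \textsc{P}^{a_j}$, $a_j\in\{0,1,2,3\}$; a $\textsc{C}$-layer is any unitary implemented by a circuit of $\textsc{CNOT}$ gates (equivalently $|x\rangle\mapsto|Ax\rangle$, $A$ invertible over $\mathbb F_2$); a $\textsc{CZ}$-layer is any product of $\textsc{CZ}$ gates on pairs of qubits. Stage notation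 -X-Y-...- lists stages in order of application (leftmost applied first). *)

(* Quantum operators on n qubits are complex (algC) matrices
   whose rows/columns are indexed by computational basis states, i.e. by
   column vectors x : 'cV['F_2]_n (enumerated via enum_val). *)
From HB Require Import structures.
From mathcomp Require Import all_boot all_order all_algebra all_field.
Set Implicit Arguments. Unset Strict Implicit. Unset Printing Implicit Defensive.
Import Order.TTheory GRing.Theory Num.Theory.
Local Open Scope ring_scope.

Notation bits n := ('cV['F_2]_n).
Notation op n := ('M[algC]_(#|{: bits n}|)).

Definition mx_of n (f : bits n -> bits n -> algC) : op n :=
  \matrix_(i, j) f (enum_val i) (enum_val j).

Definition hgate (b : bool) (u v : 'F_2) : algC :=
  if b then (-1) ^+ (nat_of_ord u * nat_of_ord v) / sqrtC 2
  else (u == v)%:R.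

Definition Hlayer n (b : {ffun 'I_n -> bool}) : op n :=
  mx_of (fun x y => \prod_(j < n) hgate (b j) (x j 0) (y j 0)).

Definition Player n (a : {ffun 'I_n -> 'I_4}) : op n :=
  mx_of (fun x y => (x == y)%:R *
                    \prod_(j < n) 'i ^+ (nat_of_ord (a j) * nat_of_ord (x j 0))).

(* C-layer  |y> |-> |A y>  (A is required to be invertible where used) *)
Definition Clayer n (A : 'M['F_2]_n) : op n :=
  mx_of (fun x y => (x == A *m y)%:R).

(* CZ-layer: the product of the CZ gates on the pairs listed in s
   (each pair must consist of two distinct qubits, where used) *)
Definition CZlayer n (s : seq ('I_n * 'I_n)) : op n :=
  mx_of (fun x y => (x == y)%:R *
    \prod_(p <- s) (-1) ^+ (nat_of_ord (x p.1 0) * nat_of_ord (x p.2 0))).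

Definition CZpairs_ok n (s : seq ('I_n * 'I_n)) : bool :=
  all (fun p => p.1 != p.2) s.

From HB Require Import structures.
From mathcomp Require Import all_boot all_order all_algebra all_field ring.
Import Order.TTheory GRing.Theory Num.Theory.
Set Implicit Arguments. Unset Strict Implicit.
Local Open Scope ring_scope.

(** The P- and CZ-layers are diagonal, and conjugating a diagonal operator
  by a C-layer yields the diagonal operator of the phase function composed
  with the linear map.  Hence the stages -C-P-C-P-C- between the two H-layers
  collapse to -C-D-, and the final stages -P-C-P-C- to -D-C-, where each D is
  the diagonal operator of a product of P-phases composed with linear maps.
  Such a phase f is quadratic: f(x + y) = f x * f y * beta x y with beta a
  symmetric ±1-valued bilinear form.  Expanding x in the standard basis, a
  quadratic phase of order 4 is the product of the single-qubit phases
  f(e_j)^(x_j), a P-layer, and of the signs beta(e_j, e_k)^(x_j x_k) for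
  j < k, a CZ-layer. *)

Definition diag_op n (f : bits n -> algC) : op n :=
  mx_of (fun x y => (x == y)%:R * f x).

Definition P_phase n (a : {ffun 'I_n -> 'I_4}) (x : bits n) : algC :=
  \prod_(j < n) 'i ^+ (nat_of_ord (a j) * nat_of_ord (x j 0)).

Definition CZ_phase n (s : seq ('I_n * 'I_n)) (x : bits n) : algC :=
  \prod_(p <- s) (-1) ^+ (nat_of_ord (x p.1 0) * nat_of_ord (x p.2 0)).

Lemma Player_diag n (a : {ffun 'I_n -> 'I_4}) : Player a = diag_op (P_phase a).
Proof. by []. Qed.

Lemma CZlayer_diag n (s : seq ('I_n * 'I_n)) : CZlayer s = diag_op (CZ_phase s).
Proof. by []. Qed.

Section OperatorAlgebra.
Variable n : nat.
Implicit Types (f g : bits n -> algC) (A B C : 'M['F_2]_n).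

Lemma mx_of_ext (F G : bits n -> bits n -> algC) :
  (forall x y, F x y = G x y) -> mx_of F = mx_of G.
Proof. by move=> eFG; apply/matrixP => i j; rewrite !mxE eFG. Qed.

Lemma mul_mx_of (F G : bits n -> bits n -> algC) :
  mx_of F *m mx_of G = mx_of (fun x z => \sum_y F x y * G y z).
Proof.
apply/matrixP => i k; rewrite !mxE.
rewrite (big_enum_val (fun y => F (enum_val i) y * G y (enum_val k))) /=.
by apply: eq_bigr => j _; rewrite !mxE.
Qed.

Lemma diag_op_ext f g : f =1 g -> diag_op f = diag_op g.
Proof. by move=> efg; apply: mx_of_ext => x y; rewrite efg. Qed.

Lemma diag_op_mul f g : diag_op f *m diag_op g = diag_op (fun x => f x * g x).
Proof.
rewrite mul_mx_of; apply: mx_of_ext => x z.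
rewrite (bigD1 x) //= big1 => [|y /negbTE]; last by rewrite eq_sym => ->; rewrite !mul0r.
by rewrite eqxx addr0 mul1r; case: eqP => [->|]; rewrite ?mul1r ?mul0r ?mulr0 // mulrA.
Qed.

Lemma diag_op_mulC f g : diag_op f *m diag_op g = diag_op g *m diag_op f.
Proof. by rewrite !diag_op_mul; apply: diag_op_ext => x; rewrite mulrC. Qed.

Lemma Clayer_mul A B : Clayer A *m Clayer B = Clayer (A *m B).
Proof.
rewrite mul_mx_of; apply: mx_of_ext => x z.
rewrite (bigD1 (B *m z)) //= big1 => [|y /negbTE ->]; last by rewrite mulr0.
by rewrite eqxx mulr1 addr0 mulmxA.
Qed.

Lemma diag_op_Clayer f A :
  diag_op f *m Clayer A = Clayer A *m diag_op (fun y => f (A *m y)).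
Proof.
rewrite !mul_mx_of; apply: mx_of_ext => x z.
rewrite (bigD1 x) //= big1 => [|y /negbTE]; last by rewrite eq_sym => ->; rewrite !mul0r.
rewrite [RHS](bigD1 z) //= [X in _ = _ + X]big1 => [|y /negbTE]; last by move=> ->; rewrite mul0r mulr0.
by rewrite !eqxx !addr0 !mul1r; case: eqP => [->|_]; rewrite ?mulr1 ?mul1r ?mulr0 ?mul0r.
Qed.

Lemma Clayer_diag_op f A : A \in unitmx ->
  Clayer A *m diag_op f = diag_op (fun x => f (invmx A *m x)) *m Clayer A.
Proof.
move=> uA; rewrite diag_op_Clayer; congr (_ *m _); apply: diag_op_ext => y.
by rewrite mulmxA mulVmx // mul1mx.
Qed.

Lemma Clayer_diag_mul A B f g :
  Clayer A *m diag_op f *m Clayer B *m diag_op g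
  = Clayer (A *m B) *m diag_op (fun x => f (B *m x) * g x).
Proof.
by rewrite -(mulmxA _ (diag_op f)) diag_op_Clayer mulmxA Clayer_mul -mulmxA diag_op_mul.
Qed.

Lemma Clayer_diag_mul_Clayer A B C f g : A *m B *m C \in unitmx ->
  Clayer A *m diag_op f *m Clayer B *m diag_op g *m Clayer C
  = diag_op (fun x => let y := C *m invmx (A *m B *m C) *m x in f (B *m y) * g y)
      *m Clayer (A *m B *m C).
Proof.
move=> uABC; rewrite Clayer_diag_mul -mulmxA diag_op_Clayer mulmxA Clayer_mul.
rewrite Clayer_diag_op //; congr (_ *m _); apply: diag_op_ext => x /=.
by rewrite !(mulmxA C).
Qed.

End OperatorAlgebra.

Lemma F2_eq01 (u : 'F_2) : u = 0 \/ u = 1.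
Proof. by case: u => [[|[|m]] lt_u2]; [left|right|]; try apply/val_inj. Qed.

Ltac case_F2 := repeat match goal with
  | u : 'F_2 |- _ => case: (F2_eq01 u) => ->; clear u end.

Lemma sign_addF2r (w : nat) (u v : 'F_2) :
  (-1 : algC) ^+ (w * nat_of_ord (u + v)) = (-1) ^+ (w * u) * (-1) ^+ (w * v).
Proof.
case_F2; rewrite /= ?muln0 ?mulr1 ?mul1r ?expr0 //.
by rewrite -exprD -signr_odd addnn odd_double.
Qed.

Lemma iexp_addF2r (a : nat) (u v : 'F_2) :
  ('i : algC) ^+ (a * nat_of_ord (u + v))
  = 'i ^+ (a * u) * 'i ^+ (a * v) * (-1) ^+ (a * u * v).
Proof.
case_F2; rewrite /= ?muln0 ?muln1 ?expr0 ?mulr1 ?mul1r //.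
by rewrite -!exprMn -expr2 sqrCi mulN1r opprK expr1n.
Qed.

Definition quadratic_phase n (f : bits n -> algC) :=
  (forall x, f x ^+ 4 = 1) /\
  exists beta : bits n -> bits n -> algC,
    [/\ forall x y, beta x y ^+ 2 = 1,
        forall x x' y, beta (x + x') y = beta x y * beta x' y
      & forall x y, f (x + y) = f x * f y * beta x y].

Lemma quadratic_phaseM n (f g : bits n -> algC) :
  quadratic_phase f -> quadratic_phase g -> quadratic_phase (fun x => f x * g x).
Proof.
move=> [f4 [bf [bf2 bfDl fD]]] [g4 [bg [bg2 bgDl gD]]]; split.
  by move=> x; rewrite exprMn f4 g4 mulr1.
exists (fun x y => bf x y * bg x y); split.
- by move=> x y; rewrite exprMn bf2 bg2 mulr1.
- by move=> x x' y; rewrite bfDl bgDl; ring.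
- by move=> x y; rewrite fD gD; ring.
Qed.

Lemma quadratic_phase_comp n (f : bits n -> algC) (M : 'M['F_2]_n) :
  quadratic_phase f -> quadratic_phase (fun x => f (M *m x)).
Proof.
move=> [f4 [beta [beta2 betaDl fD]]]; split=> //.
exists (fun x y => beta (M *m x) (M *m y)); split=> // [x x' y | x y].
  by rewrite mulmxDr betaDl.
by rewrite mulmxDr fD.
Qed.

Lemma quadratic_phase_P n (a : {ffun 'I_n -> 'I_4}) : quadratic_phase (P_phase a).
Proof.
split.
  move=> x; rewrite -prodrXl big1 // => j _.
  by rewrite exprAC (exprM _ 2 2) sqrCi sqrrN !expr1n.
exists (fun x y : bits n => \prod_(j < n) (-1) ^+ (nat_of_ord (a j) * x j 0 * y j 0)); split.
- move=> x y; rewrite -prodrXl big1 // => j _.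
  by rewrite exprAC sqrrN !expr1n.
- move=> x x' y; rewrite -big_split; apply: eq_bigr => j _ /=.
  by rewrite mxE !(mulnAC _ _ (y j 0 : nat)) sign_addF2r.
- move=> x y; rewrite -!big_split; apply: eq_bigr => j _ /=.
  by rewrite mxE iexp_addF2r.
Qed.

Lemma sorted_ord_index_enum n :
  sorted (fun i j : 'I_n => (i < j)%N) (index_enum 'I_n).
Proof.
have -> : index_enum 'I_n = ord_enum n by rewrite /index_enum !unlock.
by have := iota_ltn_sorted 0 n; rewrite -val_ord_enum sorted_map.
Qed.

Section QuadraticExpansion.
Variables (R : idomainType) (n : nat) (f : bits n -> R) (beta : bits n -> bits n -> R).
Hypotheses (f_neq0 : forall x, f x != 0) (beta_neq0 : forall x y, beta x y != 0).
Hypothesis betaDl : forall x x' y, beta (x + x') y = beta x y * beta x' y.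
Hypothesis fD : forall x y, f (x + y) = f x * f y * beta x y.

Lemma beta0x y : beta 0 y = 1.
Proof.
by apply: (mulfI (beta_neq0 0 y)); rewrite mulr1 -betaDl addr0.
Qed.

Lemma phase0 : f 0 = 1.
Proof.
have f00 := fD 0 0; rewrite addr0 beta0x mulr1 in f00.
by apply: (mulfI (f_neq0 0)); rewrite mulr1 -f00.
Qed.

Lemma betaC x y : beta x y = beta y x.
Proof.
apply: (mulfI (mulf_neq0 (f_neq0 x) (f_neq0 y))).
by rewrite -fD addrC fD (mulrC (f y)).
Qed.

Lemma betaDr x y y' : beta x (y + y') = beta x y * beta x y'.
Proof. by rewrite betaC betaDl !(betaC x). Qed.

Lemma beta_sumr x (r : seq 'I_n) (F : 'I_n -> bits n) :
  beta x (\sum_(k <- r) F k) = \prod_(k <- r) beta x (F k).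
Proof. by apply: (big_morph (beta x) (betaDr x)); rewrite betaC beta0x. Qed.

Lemma phase_sum (r : seq 'I_n) (F : 'I_n -> bits n) :
  sorted (fun i j : 'I_n => (i < j)%N) r ->
  f (\sum_(j <- r) F j) =
  \prod_(j <- r) (f (F j) * \prod_(k <- r | (j < k)%N) beta (F j) (F k)).
Proof.
elim: r => [|j r IHr] r_sorted; first by rewrite !big_nil phase0.
have j_lt : all (fun k : 'I_n => (j < k)%N) r.
  by apply: order_path_min r_sorted => ? ? ?; apply: ltn_trans.
have {}IHr := IHr (path_sorted r_sorted).
rewrite !big_cons fD IHr ltnn beta_sumr mulrAC; congr (_ * _ * _).
  rewrite [RHS]big_seq_cond big_seq; apply: eq_bigl => k.
  by case: (boolP (k \in r)) => // /(allP j_lt) ->.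
apply: eq_big_seq => i i_r.
by rewrite big_cons ltnNge ltnW ?(allP j_lt).
Qed.

Lemma phase_scale (u : 'F_2) v : f (u *: v) = f v ^+ u.
Proof. by case: (F2_eq01 u) => ->; rewrite ?scale0r ?scale1r ?phase0. Qed.

Lemma beta_scale (u w : 'F_2) v z : beta (u *: v) (w *: z) = beta v z ^+ (u * w).
Proof.
case: (F2_eq01 u) (F2_eq01 w) => -> [] ->;
  by rewrite ?scale0r ?scale1r ?beta0x // betaC beta0x.
Qed.

Lemma phase_bits x :
  f x = \prod_(j < n) f (delta_mx j 0) ^+ x j 0 *
        \prod_(p : 'I_n * 'I_n | (p.1 < p.2)%N)
           beta (delta_mx p.1 0) (delta_mx p.2 0) ^+ (x p.1 0 * x p.2 0).
Proof.
have x_sum : x = \sum_(j < n) x j 0 *: delta_mx j 0.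
  by rewrite {1}(matrix_sum_delta x); apply: eq_bigr => j _; rewrite big_ord1.
rewrite {1}x_sum phase_sum ?sorted_ord_index_enum // big_split pair_big_dep /=.
by congr (_ * _); apply: eq_bigr => *; rewrite (phase_scale, beta_scale).
Qed.

End QuadraticExpansion.

Lemma expr_eq1_neq0 (R : nzRingType) (z : R) k : z ^+ k.+1 = 1 -> z != 0.
Proof. by apply: contra_eq_neq => ->; rewrite expr0n eq_sym oner_neq0. Qed.

Lemma expr4_eq1_iexp (z : algC) : z ^+ 4 = 1 -> exists k : 'I_4, z = 'i ^+ k.
Proof.
move/eqP; rewrite (exprM _ 2 2) sqrf_eq1 -sqrCi eqf_sqr sqrf_eq1.
case/orP=> [/orP[]|/orP[]] /eqP ->.
- by exists (@Ordinal 4 0 isT).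
- by exists (@Ordinal 4 2 isT); rewrite sqrCi.
- by exists (@Ordinal 4 1 isT).
- by exists (@Ordinal 4 3 isT); rewrite exprS sqrCi mulrN1.
Qed.

Lemma quadratic_phase_decomp n (f : bits n -> algC) : quadratic_phase f ->
  exists (a : {ffun 'I_n -> 'I_4}) (s : seq ('I_n * 'I_n)),
    CZpairs_ok s /\ diag_op f = Player a *m CZlayer s.
Proof.
move=> [f4 [beta [beta2 betaDl fD]]].
have f_neq0 x : f x != 0 by apply: expr_eq1_neq0 (f4 x).
have beta_neq0 x y : beta x y != 0 by apply: expr_eq1_neq0 (beta2 x y).
pose e (j : 'I_n) : bits n := delta_mx j 0.
have [a fe] := fin_all_exists (fun j => expr4_eq1_iexp (f4 (e j))).
pose s := [seq p : 'I_n * 'I_n <- index_enum ('I_n * 'I_n)%type |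
            (p.1 < p.2)%N && (beta (e p.1) (e p.2) != 1)].
exists [ffun j => a j], s; split.
  apply/allP => p; rewrite mem_filter => /andP[/andP[lt_p _] _].
  by apply: contraTneq lt_p => ->; rewrite ltnn.
rewrite Player_diag CZlayer_diag diag_op_mul; apply: diag_op_ext => x.
rewrite (phase_bits f_neq0 beta_neq0 betaDl fD); congr (_ * _).
  by apply: eq_bigr => j _; rewrite fe ffunE -exprM.
rewrite /CZ_phase big_filter big_mkcond [RHS]big_mkcond; apply: eq_bigr => p _ /=.
case: ltnP => //= _; case: eqP => [-> | /eqP beta_neq1]; first by rewrite expr1n.
by move: (beta2 (e p.1) (e p.2)) => /eqP; rewrite sqrf_eq1 (negbTE beta_neq1) => /eqP ->.
Qed.

Lemma Player_CZlayerC n (a : {ffun 'I_n -> 'I_4}) (s : seq ('I_n * 'I_n)) :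
  Player a *m CZlayer s = CZlayer s *m Player a.
Proof. by rewrite Player_diag CZlayer_diag diag_op_mulC. Qed.

Theorem mainTheorem3 (n : nat) (hn : (0 < n)%N)
  (b1 : {ffun 'I_n -> bool}) (A1 : 'M['F_2]_n) (a1 : {ffun 'I_n -> 'I_4})
  (A2 : 'M['F_2]_n) (a2 : {ffun 'I_n -> 'I_4}) (A3 : 'M['F_2]_n)
  (b2 : {ffun 'I_n -> bool}) (a3 : {ffun 'I_n -> 'I_4}) (A4 : 'M['F_2]_n)
  (a4 : {ffun 'I_n -> 'I_4}) (A5 : 'M['F_2]_n) :
  A1 \in unitmx -> A2 \in unitmx -> A3 \in unitmx -> A4 \in unitmx ->
  A5 \in unitmx ->
  exists (b1' : {ffun 'I_n -> bool}) (C1 : 'M['F_2]_n)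
         (s1 : seq ('I_n * 'I_n)) (p1 : {ffun 'I_n -> 'I_4})
         (b2' : {ffun 'I_n -> bool}) (p2 : {ffun 'I_n -> 'I_4})
         (s2 : seq ('I_n * 'I_n)) (C2 : 'M['F_2]_n),
    [/\ C1 \in unitmx, C2 \in unitmx, CZpairs_ok s1, CZpairs_ok s2 &
      Clayer A5 *m Player a4 *m Clayer A4 *m Player a3 *m Hlayer b2
        *m Clayer A3 *m Player a2 *m Clayer A2 *m Player a1 *m Clayer A1
        *m Hlayer b1
      = Clayer C2 *m CZlayer s2 *m Player p2 *m Hlayer b2' *m Player p1
        *m CZlayer s1 *m Clayer C1 *m Hlayer b1'].
Proof.
move=> uA1 uA2 uA3 uA4 uA5.
set M := A3 *m A2 *m A1.
have uM : M \in unitmx by rewrite !unitmx_mul uA1 uA2 uA3.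
pose g2 x := P_phase a4 (A4 *m x) * P_phase a3 x.
pose h x := P_phase a2 (A2 *m x) * P_phase a1 x.
pose g1 x := h (A1 *m invmx M *m x).
have g2_quad : quadratic_phase g2 :=
  quadratic_phaseM (quadratic_phase_comp A4 (quadratic_phase_P a4)) (quadratic_phase_P a3).
have g1_quad : quadratic_phase g1 := quadratic_phase_comp _
  (quadratic_phaseM (quadratic_phase_comp A2 (quadratic_phase_P a2)) (quadratic_phase_P a1)).
have top : Clayer A5 *m Player a4 *m Clayer A4 *m Player a3
         = Clayer (A5 *m A4) *m diag_op g2 by apply: Clayer_diag_mul.
have bot : Clayer A3 *m Player a2 *m Clayer A2 *m Player a1 *m Clayer A1
         = diag_op g1 *m Clayer M by apply: Clayer_diag_mul_Clayer.
have [p2 [s2 [ok2 g2E]]] := quadratic_phase_decomp g2_quad.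
have [p1 [s1 [ok1 g1E]]] := quadratic_phase_decomp g1_quad.
exists b1, M, s1, p1, b2, p2, s2, (A5 *m A4); split=> //.
  by rewrite unitmx_mul uA5 uA4.
have -> : Clayer (A5 *m A4) *m CZlayer s2 *m Player p2 *m Hlayer b2 *m Player p1
            *m CZlayer s1 *m Clayer M *m Hlayer b1
          = Clayer (A5 *m A4) *m diag_op g2 *m Hlayer b2 *m (diag_op g1 *m Clayer M)
            *m Hlayer b1.
  by rewrite g2E g1E (Player_CZlayerC p2) !mulmxA.
by rewrite -top -bot !mulmxA.
Qed.
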